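(* Let $(K,\mathrm{val})$ be a $2$-henselian valued field whose residue class field $F$ is a euclidean field, and assume $(K,\mathrm{val})$ admits an angular component map $\mathrm{an}:K^\times\to F^\times$. Then: (1) $K$ is pythagorean, i.e. every sum of squares in $K$ is a square; (2) $\operatorname{PO}_K(1)=K^2$ and $\operatorname{PO}_K(-1)=K$; (3) for every $f\in K\setminus\{0\}$, $\operatorname{PO}_K(f)\in\{K^2,K\}$ if and only if $\mathrm{val}(f)\in G^2$; in particular, there exists $f\in K$ with $\operatorname{PO}_K(f)\ne K^2$ and $\operatorname{PO}_K(f)\ne K$ if and only if $G\ne G^2$; (4) every monogenic quadratic module $\operatorname{PO}_K(f)$ satisfies $K^2\subseteq\operatorname{PO}_K(f)\subseteq K$, and if $f_1,f_2\in K$ are such that $\operatorname{PO}_K(f_i)\notin\{K,K^2\}$ for $i=1,2$ and $\operatorname{PO}_K(f_1)\subseteq\operatorname{PO}_K(f_2)$, then $\operatorname{PO}_K(f_1)=\operatorname{PO}_K(f_2)$.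
   Context: Let $(G,\le)$ be a totally ordered abelian group written multiplicatively with identity $e$, and $G^2=\{g^2:g\in G\}$. Let $(K,\mathrm{val})$ be a valued field with surjective valuation $\mathrm{val}:K\to G\cup\{\infty\}$, valuation ring $B=\{x:\mathrm{val}(x)\ge e\}$, residue map $\pi:B\to F$, residue field $F$. A euclidean field is a formally real field $F$ with $F=F^2\cup(-F^2)$ (in particular $\mathrm{char}F=0$); $2$-henselian is then equivalent to every $x\in B^\times$ with $\pi(x)=1$ being a square in $K$. For $g\in G$, $\overline g$ denotes its class in $G/G^2$. An angular component map is a group homomorphism $\mathrm{an}:K^\times\to F^\times$ satisfying: (1) $\mathrm{an}(u)=\pi(u)$ for $u\in B^\times$; (2) $\mathrm{an}(ux)=\pi(u)\mathrm{an}(x)$; (3) for all $g\in G$, $c\in F^\times$ there is $w\in K$ with $\mathrm{val}(w)=g$, $\mathrm{an}(w)=c$; (4) for nonzero $x_1,x_2$ with $x_1+x_2\ne0$: if $\mathrm{val}(x_1)<\mathrm{val}(x_2)$ then $\mathrm{an}(x_1+x_2)=\mathrm{an}(x_1)$; if $\mathrm{val}(x_1)=\mathrm{val}(x_2)$ and $\mathrm{an}(x_1)+\mathrm{an}(x_2)\ne0$ then $\mathrm{val}(x_1+x_2)=\mathrm{val}(x_1)$ and $\mathrm{an}(x_1+x_2)=\mathrm{an}(x_1)+\mathrm{an}(x_2)$; (5) if $\overline{\mathrm{val}(x)}=\overline{\mathrm{val}(y)}$ and $\mathrm{an}(x)=\mathrm{an}(y)$ then $y=u^2x$ for some $u\in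 K^\times$; (6) for $a,u\in K^\times$, $\mathrm{an}(au^2)=\mathrm{an}(a)k^2$ for some $k\in F^\times$. For $f\in K$, $\operatorname{PO}_K(f)=\{\sigma_0+\sigma_1f:\ \sigma_0,\sigma_1\text{ finite sums of squares in }K\}$ is the monogenic quadratic module generated by $f$; $K^2=\{x^2:x\in K\}$. *)

From mathcomp Require Import all_boot all_order all_algebra.
Set Implicit Arguments. Unset Strict Implicit. Unset Printing Implicit Defensive.
Import Order.TTheory GRing.Theory Num.Theory.
Local Open Scope ring_scope.

(* The value group G is written ADDITIVELY: identity 0, product + ; the
   paper's G^2 = {g^2} becomes {g + g}. *)
Definition ordered_abelian_group (G : zmodType) (le : rel G) : Prop :=
  [/\ (forall a, le a a),
      (forall a b, le a b -> le b a -> a = b),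
      (forall a b c, le a b -> le b c -> le a c),
      (forall a b, le a b \/ le b a)
    & (forall a b c, le a b -> le (a + c) (b + c))].

Definition in_G2 (G : zmodType) (g : G) : Prop := exists h : G, g = h + h.

(* G union {oo}, with oo = None *)
Definition ole (G : zmodType) (le : rel G) (a b : option G) : Prop :=
  match a, b with
  | _, None => True
  | None, Some _ => False
  | Some x, Some y => le x y
  end.

Definition oadd (G : zmodType) (a b : option G) : option G :=
  match a, b with
  | Some x, Some y => Some (x + y)
  | _, _ => None
  end.

Definition surj_valuation (K : fieldType) (G : zmodType) (le : rel G)
    (v : K -> option G) : Prop :=
  [/\ (forall x, v x = None <-> x = 0),
      (forall x y, v (x * y) = oadd (v x) (v y)),
      (forall x y, ole le (v x) (v (x + y)) \/ ole le (v y) (v (x + y)))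
    & (forall g : G, exists x, v x = Some g)].

Definition in_valring (K : fieldType) (G : zmodType) (le : rel G)
    (v : K -> option G) (x : K) : Prop := ole le (Some 0) (v x).

(* pi : B -> F is the residue map onto the residue field F = B / m:
   a surjective ring homomorphism on B whose kernel is the maximal ideal
   m = {x | val x > e}.  (pi is given as a total function; only its values
   on B matter.) *)
Definition residue_map (K : fieldType) (G : zmodType) (le : rel G)
    (v : K -> option G) (F : fieldType) (pi : K -> F) : Prop :=
  [/\ (forall x y, in_valring le v x -> in_valring le v y ->
         pi (x + y) = pi x + pi y),
      (forall x y, in_valring le v x -> in_valring le v y ->
         pi (x * y) = pi x * pi y),
      pi 1 = 1,
      (forall c : F, exists x, in_valring le v x /\ pi x = c)
    & (forall x, in_valring le v x ->
         (pi x = 0 <-> (ole le (Some 0) (v x) /\ v x <> Some 0)))].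

Definition is_square (R : pzRingType) (x : R) : Prop := exists y : R, x = y ^+ 2.

Definition sum_of_squares (R : pzRingType) (x : R) : Prop :=
  exists s : seq R, x = \sum_(a <- s) a ^+ 2.

Definition formally_real (F : fieldType) : Prop := ~ sum_of_squares (-1 : F).

Definition euclidean_field (F : fieldType) : Prop :=
  formally_real F /\ (forall x : F, is_square x \/ is_square (- x)).

Definition pythagorean (K : fieldType) : Prop :=
  forall x : K, sum_of_squares x -> is_square x.

(* 2-henselian, in the form valid when the residue field is euclidean
   (as stated in the paper's context): every 1-unit is a square. *)
Definition two_henselian (K : fieldType) (G : zmodType) (v : K -> option G)
    (F : fieldType) (pi : K -> F) : Prop :=
  forall x : K, v x = Some 0 -> pi x = 1 -> is_square x.

Definition angular_component (K : fieldType) (G : zmodType) (le : rel G)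
    (v : K -> option G) (F : fieldType) (pi : K -> F) (an : K -> F) : Prop :=
      (forall x, x != 0 -> an x != 0)
      /\ (forall x y, x != 0 -> y != 0 -> an (x * y) = an x * an y) /\
      (forall u, v u = Some 0 -> an u = pi u) /\
      (forall u x, v u = Some 0 -> x != 0 -> an (u * x) = pi u * an x) /\
      (forall (g : G) (c : F), c != 0 -> exists w, v w = Some g /\ an w = c) /\
      (forall (x1 x2 : K) (g1 g2 : G), x1 != 0 -> x2 != 0 -> x1 + x2 != 0 ->
         v x1 = Some g1 -> v x2 = Some g2 ->
         ((le g1 g2 /\ g1 <> g2) -> an (x1 + x2) = an x1) /\
         (g1 = g2 -> an x1 + an x2 != 0 ->
            v (x1 + x2) = v x1 /\ an (x1 + x2) = an x1 + an x2)) /\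
      (forall (x y : K) (gx gy : G), x != 0 -> y != 0 ->
         v x = Some gx -> v y = Some gy -> in_G2 (gx - gy) -> an x = an y ->
         exists u, u != 0 /\ y = u ^+ 2 * x) /\
      (forall a u : K, a != 0 -> u != 0 ->
         exists k : F, k != 0 /\ an (a * u ^+ 2) = an a * k ^+ 2).

Definition PO (K : fieldType) (f : K) : K -> Prop :=
  fun x => exists s0 s1 : K, [/\ sum_of_squares s0, sum_of_squares s1
                               & x = s0 + s1 * f].

Definition same_set (T : Type) (A B : T -> Prop) : Prop := forall x, A x <-> B x.
Definition incl (T : Type) (A B : T -> Prop) : Prop := forall x, A x -> B x.
Definition setT_ (T : Type) : T -> Prop := fun _ => True.
Definition squares (K : fieldType) : K -> Prop := fun x => is_square x.

From mathcomp Require Import all_boot all_order all_algebra ring.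
From Stdlib Require Import Classical.
Set Implicit Arguments. Unset Strict Implicit. Unset Printing Implicit Defensive.
Import GRing.Theory.
Local Open Scope ring_scope.

(* Monogenic quadratic modules over a 2-henselian valued field with euclidean
   residue field.

   The proof rests on two facts about units: every 1-unit is a square
   (2-henselianity), and hence, the residue field being euclidean, every unit
   is a square or minus a square.  From these:
   - a^2 + b^2 = a^2 (1 + (b/a)^2) is a square when val a <= val b, because
     1 + (b/a)^2 is a unit with residue 1 + p^2, a nonzero square of F;
     so K is pythagorean and PO(f) = {a^2 + b^2 f}.
   - if val f is a double, f = u w^2 with u a unit, so f = +-c^2 and PO(f) is
     K^2 (f = c^2) or K (f = -c^2, every x being a difference of squares);
   - if val f is not a double, the two summands of a^2 + b^2 f have distinct
     values and the dominant one absorbs the other up to a 1-unit, so every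
     element of PO(f) is e^2 or e^2 f.  Hence -1 and f separate PO(f) from K
     and K^2, and PO(f1) <= PO(f2) forces f1 = e^2 f2, i.e. PO(f1) = PO(f2). *)

Lemma sos_sqr (R : pzRingType) (x : R) : sum_of_squares (x ^+ 2).
Proof. by exists [:: x]; rewrite big_seq1. Qed.

Lemma sos_scale (R : comPzRingType) (c s : R) :
  sum_of_squares s -> sum_of_squares (c ^+ 2 * s).
Proof.
move=> [l ->]; exists [seq c * a | a <- l].
by rewrite big_map big_distrr /=; apply: eq_bigr => a _; rewrite exprMn.
Qed.

Lemma PO_of_square (K : fieldType) (f x : K) : is_square x -> PO f x.
Proof.
move=> [y ->]; exists (y ^+ 2), 0; rewrite mul0r addr0; split => //.
  exact: sos_sqr.
by exists [::]; rewrite big_nil.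
Qed.

Lemma PO_self (K : fieldType) (f : K) : PO f f.
Proof.
by exists 0, 1; split; rewrite ?add0r ?mul1r //;
  [exists [::]; rewrite big_nil | exists [:: 1]; rewrite big_seq1 expr1n].
Qed.

Lemma PO_scale (K : fieldType) (f c x : K) :
  c != 0 -> PO (c ^+ 2 * f) x <-> PO f x.
Proof.
move=> nc; split.
  move=> [s0 [s1 [H0 H1 ->]]]; exists s0, (s1 * c ^+ 2); split => //.
    by rewrite mulrC; apply: sos_scale.
  by rewrite mulrA.
move=> [s0 [s1 [H0 H1 ->]]]; exists s0, ((c^-1) ^+ 2 * s1); split => //.
  exact: sos_scale.
by rewrite mulrACA -exprMn mulVf // expr1n mul1r.
Qed.

Lemma diff_of_squares (K : fieldType) (x : K) : (1 + 1 : K) != 0 ->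
  x = ((x + 1) / (1 + 1)) ^+ 2 - ((x - 1) / (1 + 1)) ^+ 2.
Proof. by move=> two; field. Qed.

Lemma PO_neg1_full (K : fieldType) : (1 + 1 : K) != 0 ->
  same_set (PO (-1)) (@setT_ K).
Proof.
move=> two x; split => // _.
exists (((x + 1) / (1 + 1)) ^+ 2), (((x - 1) / (1 + 1)) ^+ 2).
by split; [exact: sos_sqr | exact: sos_sqr | rewrite mulrN1 -diff_of_squares].
Qed.

Lemma PO_sum2 (K : fieldType) (f x : K) : pythagorean K ->
  PO f x <-> exists a b, x = a ^+ 2 + b ^+ 2 * f.
Proof.
move=> pyth; split.
  by move=> [s0 [s1 [/pyth[a ->] /pyth[b ->] ->]]]; exists a, b.
by move=> [a [b ->]]; exists (a ^+ 2), (b ^+ 2); split => //; apply: sos_sqr.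
Qed.

Lemma PO_sqr_squares (K : fieldType) (c : K) : pythagorean K ->
  same_set (PO (c ^+ 2)) (@squares K).
Proof.
move=> pyth x; split; last exact: PO_of_square.
move=> /(PO_sum2 _ _ pyth) [a [b ->]]; apply: pyth.
by exists [:: a; b * c]; rewrite big_cons big_seq1 exprMn.
Qed.

Lemma formally_real_neg1 (F : fieldType) (p d : F) :
  formally_real F -> - 1 != p ^+ 2 + d ^+ 2.
Proof.
by move=> fr; apply/eqP => H; apply: fr; exists [:: p; d];
  rewrite big_cons big_seq1.
Qed.

Section ValuedField.

Variables (G : zmodType) (le : rel G).
Hypothesis hG : ordered_abelian_group le.

Lemma ogle_refl a : le a a.
Proof. by case: hG. Qed.

Lemma ogle_anti a b : le a b -> le b a -> a = b.
Proof. by case: hG => _ anti _ _ _; apply: anti. Qed.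

Lemma ogle_trans a b c : le a b -> le b c -> le a c.
Proof. by case: hG => _ _ trans _ _; apply: trans. Qed.

Lemma ogle_total a b : le a b \/ le b a.
Proof. by case: hG. Qed.

Lemma ogle_addr c a b : le a b -> le (a + c) (b + c).
Proof. by case: hG => _ _ _ _ add; apply: add. Qed.

Lemma ogle_subr_ge0 a b : le a b -> le 0 (b - a).
Proof. by move/(ogle_addr (- a)); rewrite subrr. Qed.

Lemma double_eq0 (h : G) : h + h = 0 -> h = 0.
Proof.
move=> hh; case: (ogle_total 0 h) => H; have := ogle_addr h H.
all: by rewrite add0r hh => H'; apply: ogle_anti.
Qed.

Lemma ole_trans a b c : ole le a b -> ole le b c -> ole le a c.
Proof. by case: a b c => [a|] [b|] [c|] //=; apply: ogle_trans. Qed.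

Variables (K : fieldType) (v : K -> option G).
Hypothesis hv : surj_valuation le v.

Lemma val_eqNone x : v x = None <-> x = 0.
Proof. by case: hv. Qed.

Lemma valM x y : v (x * y) = oadd (v x) (v y).
Proof. by case: hv. Qed.

Lemma val_ultra x y :
  ole le (v x) (v (x + y)) \/ ole le (v y) (v (x + y)).
Proof. by case: hv. Qed.

Lemma val_surj g : exists x, v x = Some g.
Proof. by case: hv. Qed.

Lemma val0 : v 0 = None.
Proof. exact/val_eqNone. Qed.

Lemma val_neq0 x : x != 0 -> exists g, v x = Some g.
Proof.
move=> /eqP nx; case E: (v x) => [g|]; first by exists g.
by move/val_eqNone: E.
Qed.

Lemma val_Some_neq0 x g : v x = Some g -> x != 0.
Proof. by move=> E; apply/eqP => x0; move: E; rewrite x0 val0. Qed.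

Lemma valM_Some x y g h : v x = Some g -> v y = Some h ->
  v (x * y) = Some (g + h).
Proof. by move=> Ex Ey; rewrite valM Ex Ey. Qed.

Lemma val1 : v 1 = Some 0.
Proof.
have [g E] := val_neq0 (oner_neq0 K).
have := valM 1 1; rewrite mulr1 E /= => -[gg].
by congr Some; apply: (@addrI _ g); rewrite addr0 -gg.
Qed.

Lemma valV x g : v x = Some g -> v x^-1 = Some (- g).
Proof.
move=> E; have nx := val_Some_neq0 E.
have [h Eh] := val_neq0 (invr_neq0 nx).
have := valM x x^-1; rewrite mulfV // val1 E Eh /= => -[hg].
by congr Some; apply: (@addrI _ g); rewrite subrr -hg.
Qed.

Lemma valN1 : v (-1) = Some 0.
Proof.
have [h E] : exists h, v (-1) = Some h by apply: val_neq0; rewrite oppr_eq0 oner_eq0.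
have := valM (-1) (-1); rewrite mulrNN mulr1 val1 E /= => -[hh].
by rewrite (double_eq0 (esym hh)).
Qed.

Lemma valN x : v (- x) = v x.
Proof. by rewrite -mulN1r valM valN1; case: (v x) => //= g; rewrite add0r. Qed.

Lemma val_sqr x g : v x = Some g -> v (x ^+ 2) = Some (g + g).
Proof. by move=> E; rewrite expr2 (valM_Some E E). Qed.

Lemma val_div x y g h : v x = Some g -> v y = Some h ->
  v (x / y) = Some (g - h).
Proof. by move=> Ex Ey; rewrite (valM_Some Ex (valV Ey)). Qed.

Lemma val_sqr_G2 c g : v (c ^+ 2) = Some g -> in_G2 g.
Proof.
move=> E; have nc : c != 0 by apply/eqP => c0; move: E; rewrite c0 expr0n val0.
by have [h Eh] := val_neq0 nc; move: E; rewrite (val_sqr Eh) => -[<-]; exists h.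
Qed.

Lemma val_add_strict x y g h : v x = Some g -> v y = Some h ->
  le g h -> g <> h -> v (x + y) = Some g.
Proof.
move=> Ex Ey lgh ngh.
case Es: (v (x + y)) => [k|]; last first.
  move/val_eqNone: Es => /eqP; rewrite addr_eq0 => /eqP yx.
  by move: Ex; rewrite yx valN Ey => -[/esym].
have lgk : le g k.
  by case: (val_ultra x y); rewrite ?Ex ?Ey Es //= => H; apply: ogle_trans H.
have lkg : le k g.
  case: (val_ultra (x + y) (- y)); rewrite addrK ?valN ?Es ?Ex ?Ey //= => H.
  by case: ngh; apply: ogle_anti.
by rewrite (ogle_anti lkg lgk).
Qed.

Lemma valring_add x y : in_valring le v x -> in_valring le v y ->
  in_valring le v (x + y).
Proof.
by move=> Bx By; case: (val_ultra x y); [apply: ole_trans Bx | apply: ole_trans By].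
Qed.

Lemma valring_mul x y : in_valring le v x -> in_valring le v y ->
  in_valring le v (x * y).
Proof.
rewrite /in_valring valM; case: (v x) (v y) => [g|] [h|] //= Hg Hh.
by apply: ogle_trans Hh _; have := ogle_addr h Hg; rewrite add0r.
Qed.

Lemma valring_unit x : v x = Some 0 -> in_valring le v x.
Proof. by move=> E; rewrite /in_valring E; apply: ogle_refl. Qed.

Variables (F : fieldType) (pi : K -> F).
Hypothesis hpi : residue_map le v pi.

Lemma residueD x y : in_valring le v x -> in_valring le v y ->
  pi (x + y) = pi x + pi y.
Proof. by case: hpi => D _ _ _ _; apply: D. Qed.

Lemma residueM x y : in_valring le v x -> in_valring le v y ->
  pi (x * y) = pi x * pi y.
Proof. by case: hpi => _ M _ _ _; apply: M. Qed.

Lemma residue1 : pi 1 = 1.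
Proof. by case: hpi. Qed.

Lemma residue_eq0 x : in_valring le v x ->
  (pi x = 0 <-> (ole le (Some 0) (v x) /\ v x <> Some 0)).
Proof. by case: hpi => _ _ _ _ K0; apply: K0. Qed.

Lemma residue0 : pi 0 = 0.
Proof.
have B0 : in_valring le v 0 by rewrite /in_valring val0.
have := residueD B0 B0; rewrite addr0 => H.
by apply: (@addrI _ (pi 0)); rewrite addr0 -H.
Qed.

Lemma residueN x : in_valring le v x -> pi (- x) = - pi x.
Proof.
move=> Bx; have piN1 : pi (-1) = -1.
  have := residueD (valring_unit val1) (valring_unit valN1).
  rewrite subrr residue0 residue1 => /esym/eqP.
  by rewrite addr_eq0 => /eqP ->; rewrite opprK.
by rewrite -mulN1r (residueM (valring_unit valN1) Bx) piN1 mulN1r.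
Qed.

Lemma residue_unit_neq0 x : v x = Some 0 -> pi x != 0.
Proof.
by move=> E; apply/eqP => /(residue_eq0 (valring_unit E)) []; rewrite E.
Qed.

Lemma residue_neq0_unit x : in_valring le v x -> pi x != 0 -> v x = Some 0.
Proof.
move=> Bx nz; case: (eqVneq (v x) (Some 0)) => // ne.
by case/eqP: nz; apply/(residue_eq0 Bx); split => //; apply/eqP.
Qed.

Lemma residue_lift_unit d : d != 0 -> exists u, v u = Some 0 /\ pi u = d.
Proof.
case: hpi => _ _ _ S _ nd; have [x [Bx px]] := S d.
by exists x; split => //; apply: residue_neq0_unit; rewrite ?px.
Qed.

Lemma residueV u : v u = Some 0 -> v u^-1 = Some 0 /\ pi u^-1 = (pi u)^-1.
Proof.
move=> E; have Ei := valV E; rewrite oppr0 in Ei; split => //.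
have := residueM (valring_unit E) (valring_unit Ei).
rewrite mulfV ?(val_Some_neq0 E) // residue1 => H.
by rewrite -{1}(mulKf (residue_unit_neq0 E) (pi u^-1)) -H mulr1.
Qed.

Lemma one_unit z k : v z = Some k -> le 0 k -> k <> 0 ->
  v (1 + z) = Some 0 /\ pi (1 + z) = 1.
Proof.
move=> E lk nk; split; first by apply: (val_add_strict val1 E lk) => e; apply: nk.
have Bz : in_valring le v z by rewrite /in_valring E.
rewrite (residueD (valring_unit val1) Bz) residue1.
have -> : pi z = 0 by apply/(residue_eq0 Bz); rewrite E; split => // -[].
by rewrite addr0.
Qed.

Hypothesis hF : euclidean_field F.

(* 2 != 0 in K, as 1 + 1 has the nonzero residue 1 + 1 in the formally real F. *)
Lemma two_neq0 : (1 + 1 : K) != 0.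
Proof.
apply/eqP => H; have := residueD (valring_unit val1) (valring_unit val1).
rewrite H residue0 residue1 => /esym/eqP; rewrite addr_eq0 => /eqP H2.
by have := formally_real_neg1 1 0 (proj1 hF); rewrite -H2 expr0n expr1n addr0 eqxx.
Qed.

(* -1 is not a square in K, its residue -1 not being a square in F. *)
Lemma neg1_not_square : ~ is_square (-1 : K).
Proof.
move=> [y Hy].
have ny : y != 0.
  by apply/eqP => y0; move: Hy; rewrite y0 expr0n => /eqP; rewrite oppr_eq0 oner_eq0.
have [g Eg] := val_neq0 ny.
have := val_sqr Eg; rewrite -Hy valN1 => -[/esym/double_eq0 g0].
rewrite g0 in Eg; have By := valring_unit Eg.
have := residueN (valring_unit val1).
rewrite residue1 Hy expr2 (residueM By By) -expr2 => piN1.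
by have := formally_real_neg1 (pi y) 0 (proj1 hF); rewrite -piN1 expr0n addr0 eqxx.
Qed.

Hypothesis h2 : two_henselian v pi.

Lemma unit_square_of_residue y d : v y = Some 0 -> d != 0 -> pi y = d ^+ 2 ->
  is_square y.
Proof.
move=> Ey nd pd; have [u [Eu pu]] := residue_lift_unit nd.
have [Ei pii] := residueV Eu.
have Bi2 : in_valring le v ((u^-1) ^+ 2).
  by rewrite expr2; apply: valring_mul; apply: valring_unit.
have [e He] : is_square (y * (u^-1) ^+ 2).
  apply: h2; first by rewrite (valM_Some Ey (val_sqr Ei)) !addr0.
  rewrite (residueM (valring_unit Ey) Bi2) expr2.
  rewrite (residueM (valring_unit Ei) (valring_unit Ei)) pii pu pd.
  by rewrite -expr2 -exprMn mulfV // expr1n.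
exists (e * u); rewrite exprMn -He -mulrA -exprMn mulVf ?expr1n ?mulr1 //.
exact: val_Some_neq0 Eu.
Qed.

Lemma unit_square_class u : v u = Some 0 -> is_square u \/ is_square (- u).
Proof.
move=> Eu; have pu := residue_unit_neq0 Eu.
case: (proj2 hF (pi u)) => [[d Hd]|[d Hd]].
  left; apply: (unit_square_of_residue Eu _ Hd).
  by apply: contraNneq pu => d0; rewrite Hd d0 expr0n.
right; have pNu := etrans (residueN (valring_unit Eu)) Hd.
apply: (unit_square_of_residue (y := - u) _ _ pNu); first by rewrite valN.
by apply: contraNneq pu => d0; rewrite -oppr_eq0 Hd d0 expr0n.
Qed.

(* 1 + t^2 is a square for t in the valuation ring: its residue 1 + p^2 is a
   nonzero square of the euclidean field F. *)
Lemma one_plus_sqr_square t : in_valring le v t -> is_square (1 + t ^+ 2).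
Proof.
move=> Bt; have Bt2 : in_valring le v (t ^+ 2) by rewrite expr2; apply: valring_mul.
have pE : pi (1 + t ^+ 2) = 1 + pi t ^+ 2.
  by rewrite (residueD (valring_unit val1) Bt2) residue1 expr2 (residueM Bt Bt).
have nz : 1 + pi t ^+ 2 != 0.
  apply: contraNneq (formally_real_neg1 (pi t) 0 (proj1 hF)) => /eqP.
  by rewrite addr_eq0 expr0n addr0 => /eqP ->; rewrite opprK.
have Eu : v (1 + t ^+ 2) = Some 0.
  apply: residue_neq0_unit; rewrite ?pE //.
  by apply: valring_add => //; apply: valring_unit val1.
case: (proj2 hF (1 + pi t ^+ 2)) => [[d Hd]|[d Hd]].
  apply: (unit_square_of_residue Eu _ (etrans pE Hd)).
  by apply: contraNneq nz => d0; rewrite Hd d0 expr0n.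
have := formally_real_neg1 (pi t) d (proj1 hF).
by rewrite -Hd opprD addrCA subrr addr0 eqxx.
Qed.

(* A sum of two squares is a square: a^2 + b^2 = a^2 (1 + (b/a)^2) when
   val a <= val b. *)
Lemma sqrD_square (a b : K) : is_square (a ^+ 2 + b ^+ 2).
Proof.
wlog [g [h [Ea Eb lgh]]] : a b / exists g h, [/\ v a = Some g, v b = Some h & le g h].
  move=> wlog_le.
  case: (eqVneq a 0) => [->|na]; first by exists b; rewrite expr0n add0r.
  case: (eqVneq b 0) => [->|nb]; first by exists a; rewrite expr0n addr0.
  have [g Ea] := val_neq0 na; have [h Eb] := val_neq0 nb.
  case: (ogle_total g h) => H; first by apply: wlog_le; exists g, h.
  by rewrite addrC; apply: wlog_le; exists h, g.
have na := val_Some_neq0 Ea.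
have Bt : in_valring le v (b / a).
  by rewrite /in_valring (val_div Eb Ea); apply: ogle_subr_ge0.
have [e He] := one_plus_sqr_square Bt.
by exists (a * e); rewrite exprMn -He mulrDr mulr1 -exprMn mulrCA mulfV // mulr1.
Qed.

Lemma henselian_pythagorean : pythagorean K.
Proof.
move=> x [s ->]; elim: s => [|c s [y Hy]]; first by exists 0; rewrite big_nil expr0n.
by rewrite big_cons Hy; apply: sqrD_square.
Qed.

(* Of two summands with distinct values, the one of smaller value absorbs the
   other up to a square factor (a 1-unit). *)
Lemma dominant_sum y z g h : v y = Some g -> v z = Some h -> le g h -> g <> h ->
  exists e, y + z = e ^+ 2 * y.
Proof.
move=> Ey Ez lgh ngh.
have nz : h - g <> 0 by move=> /subr0_eq; apply: nesym.
have [Ew pw] := one_unit (val_div Ez Ey) (ogle_subr_ge0 lgh) nz.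
have [e He] := h2 Ew pw.
by exists e; rewrite -He mulrDl mul1r mulfVK // (val_Some_neq0 Ey).
Qed.

(* If val f is not a double, every element of PO f is a square or a square
   times f, since a^2 and b^2 f never have the same value. *)
Lemma PO_dichotomy f g x : v f = Some g -> ~ in_G2 g -> PO f x ->
  exists e, x = e ^+ 2 \/ x = e ^+ 2 * f.
Proof.
move=> Ef ng /(PO_sum2 _ _ henselian_pythagorean) [a [b ->]].
case: (eqVneq a 0) => [->|na]; first by exists b; right; rewrite expr0n add0r.
case: (eqVneq b 0) => [->|nb]; first by exists a; left; rewrite expr0n mul0r addr0.
have [ga Ea] := val_neq0 na; have [gb Eb] := val_neq0 nb.
have E1 := val_sqr Ea; have E2 := valM_Some (val_sqr Eb) Ef.
have neq : ga + ga <> gb + gb + g.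
  move=> H; apply: ng; exists (ga - gb).
  have -> : (ga - gb) + (ga - gb) = (ga + ga) - (gb + gb) by rewrite opprD addrACA.
  by rewrite H addrAC subrr add0r.
case: (ogle_total (ga + ga) (gb + gb + g)) => H.
  have [e He] := dominant_sum E1 E2 H neq.
  by exists (e * a); left; rewrite He exprMn.
have [e He] := dominant_sum E2 E1 H (fun E => neq (esym E)).
by exists (e * b); right; rewrite addrC He exprMn mulrA.
Qed.

Lemma nonsquare_of_val f g : v f = Some g -> ~ in_G2 g -> ~ is_square f.
Proof. by move=> Ef ng [c Hc]; rewrite Hc in Ef; apply: ng (val_sqr_G2 Ef). Qed.

(* If val f is not a double, f separates PO f from K^2 and -1 separates it
   from K. *)
Lemma PO_val_notG2 f g : v f = Some g -> ~ in_G2 g ->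
  ~ same_set (PO f) (@squares K) /\ ~ same_set (PO f) (@setT_ K).
Proof.
move=> Ef ng; split.
  by move=> Hsq; apply: (nonsquare_of_val Ef ng); apply/Hsq/PO_self.
move=> Hfull; have [e [He|He]] := PO_dichotomy Ef ng (proj2 (Hfull (-1)) I).
  by apply: neg1_not_square; exists e.
have ne : e != 0.
  by apply/eqP => e0; move: He; rewrite e0 expr0n mul0r => /eqP; rewrite oppr_eq0 oner_eq0.
have [ge Ee] := val_neq0 ne.
have := valM_Some (val_sqr Ee) Ef; rewrite -He valN1 => -[/esym/eqP].
rewrite addrC addr_eq0 => /eqP gE; apply: ng.
by exists (- ge); rewrite gE opprD.
Qed.

(* If val f is a double, then f = u w^2 with u a unit, so f = c^2 or
   f = -c^2 with c != 0. *)
Lemma PO_val_G2 f g : v f = Some g -> in_G2 g ->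
  same_set (PO f) (@squares K) \/ same_set (PO f) (@setT_ K).
Proof.
move=> Ef [h gE]; have [w Ew] := val_surj h; have nw := val_Some_neq0 Ew.
have Eu : v (f / w ^+ 2) = Some 0 by rewrite (val_div Ef (val_sqr Ew)) gE subrr.
have fE : f = f / w ^+ 2 * w ^+ 2 by rewrite mulfVK // expf_neq0.
case: (unit_square_class Eu) => [[e He]|[e He]].
  by left; rewrite fE He -exprMn; apply: PO_sqr_squares henselian_pythagorean.
right; have ne : e != 0.
  by apply: contraNneq (val_Some_neq0 Eu) => e0; rewrite -oppr_eq0 He e0 expr0n.
have -> : f = (e * w) ^+ 2 * (-1) by rewrite mulrN1 exprMn -He mulNr opprK -fE.
by move=> x; rewrite PO_scale ?mulf_neq0 //; apply: (PO_neg1_full two_neq0 x).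
Qed.

Lemma PO_trivial_iff f : f != 0 ->
  (same_set (PO f) (@squares K) \/ same_set (PO f) (@setT_ K)) <->
  (exists g, v f = Some g /\ in_G2 g).
Proof.
move=> nf; have [g Ef] := val_neq0 nf; split; last first.
  by move=> [g' [Ef' hg]]; apply: PO_val_G2 Ef' hg.
move=> Htriv; exists g; split => //; case: (classic (in_G2 g)) => // ng.
by have [nsq nfull] := PO_val_notG2 Ef ng; case: Htriv.
Qed.

Lemma PO_nontrivial_val f :
  ~ same_set (PO f) (@squares K) -> ~ same_set (PO f) (@setT_ K) ->
  f != 0 /\ exists g, v f = Some g /\ ~ in_G2 g.
Proof.
move=> nsq nfull; have nf : f != 0.
  apply/eqP => f0; apply: nsq; rewrite f0.
  by have := PO_sqr_squares 0 henselian_pythagorean; rewrite expr0n.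
split => //; have [g Ef] := val_neq0 nf; exists g; split => // hg.
by case: (PO_val_G2 Ef hg).
Qed.

Lemma PO_nontrivial_exists :
  (exists f : K, ~ same_set (PO f) (@squares K) /\ ~ same_set (PO f) (@setT_ K))
  <-> (exists g : G, ~ in_G2 g).
Proof.
split.
  by move=> [f [nsq nfull]]; have [_ [g [_ ng]]] := PO_nontrivial_val nsq nfull; exists g.
by move=> [g ng]; have [f Ef] := val_surj g; exists f; apply: PO_val_notG2 Ef ng.
Qed.

(* Part (4): nontrivial monogenic quadratic modules form an antichain, since
   f1 in PO f2 forces f1 = e^2 f2. *)
Lemma PO_nontrivial_incl f1 f2 :
  ~ same_set (PO f1) (@squares K) -> ~ same_set (PO f1) (@setT_ K) ->
  ~ same_set (PO f2) (@squares K) -> ~ same_set (PO f2) (@setT_ K) ->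
  incl (PO f1) (PO f2) -> same_set (PO f1) (PO f2).
Proof.
move=> nsq1 nfull1 nsq2 nfull2 inc.
have [nf1 [g1 [E1 ng1]]] := PO_nontrivial_val nsq1 nfull1.
have [_ [g2 [E2 ng2]]] := PO_nontrivial_val nsq2 nfull2.
have [e [He|He]] := PO_dichotomy E2 ng2 (inc _ (PO_self f1)).
  by case: (nonsquare_of_val E1 ng1); exists e.
have ne : e != 0 by apply: contraNneq nf1 => e0; rewrite He e0 expr0n mul0r.
by move=> x; rewrite He PO_scale.
Qed.

End ValuedField.

Theorem mainTheorem17
  (K : fieldType) (G : zmodType) (le : rel G) (v : K -> option G)
  (F : fieldType) (pi : K -> F)
  (hG : ordered_abelian_group le)
  (hv : surj_valuation le v)
  (hpi : residue_map le v pi)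
  (hF : euclidean_field F)
  (h2 : two_henselian v pi)
  (han : exists an : K -> F, angular_component le v pi an) :
  (* (1) *)
  pythagorean K /\
  (* (2) *)
  (same_set (PO 1) (@squares K) /\ same_set (PO (-1)) (@setT_ K)) /\
  (* (3) *)
  ((forall f : K, f != 0 ->
      ((same_set (PO f) (@squares K) \/ same_set (PO f) (@setT_ K)) <->
       (exists g, v f = Some g /\ in_G2 g))) /\
   ((exists f : K, ~ same_set (PO f) (@squares K) /\ ~ same_set (PO f) (@setT_ K))
      <-> (exists g : G, ~ in_G2 g))) /\
  (* (4) *)
  ((forall f : K, incl (@squares K) (PO f) /\ incl (PO f) (@setT_ K)) /\
   (forall f1 f2 : K,
      ~ same_set (PO f1) (@squares K) -> ~ same_set (PO f1) (@setT_ K) ->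
      ~ same_set (PO f2) (@squares K) -> ~ same_set (PO f2) (@setT_ K) ->
      incl (PO f1) (PO f2) -> same_set (PO f1) (PO f2))).
Proof.
have pyth : pythagorean K := henselian_pythagorean hG hv hpi hF h2.
split; first exact: pyth.
split.
  split; first by have := PO_sqr_squares 1 pyth; rewrite expr1n.
  exact: PO_neg1_full (two_neq0 hG hv hpi hF).
split.
  split; first by move=> f nf; exact: (PO_trivial_iff hG hv hpi hF h2 nf).
  exact: (PO_nontrivial_exists hG hv hpi hF h2).
split; first by move=> f; split => // x; apply: PO_of_square.
by move=> f1 f2; exact: (PO_nontrivial_incl hG hv hpi hF h2 (f1 := f1) (f2 := f2)).
Qed.
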